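(* Assume $I_\delta=0$. There exists a constant $C_{\mathcal{G}}$, independent of $\delta$ (and of $c\in[c_0,c_1]$ and $R_0\in\mathcal{R}_c$), such that for every $\delta$-admissible $S\in\mathsf{X}$ and $G=\mathcal{G}(S)$, $$\|\mathcal{A}G\|_\infty\le C_{\mathcal{G}}\,\delta,\qquad \|\mathcal{A}^2G\|_\infty\le C_{\mathcal{G}}\big(1+\|S''\|_\infty\big)\delta^2 .$$
   Context: $(\mathcal{A}F)(x)=\int_{x-1/2}^{x+1/2}F(s)\,ds$, $\Delta_1F(x)=F(x+1)-2F(x)+F(x-1)$, $a(k)=\frac{\sin(k/2)}{k/2}$, $\Psi_0'(r)=\mathrm{sgn}(r)$. Potentials: $(\Psi_\delta)_{\delta>0}$ is a family of $C^2$ functions such that $\Psi_\delta'(r)=\mathrm{sgn}(r)$ for $r\notin(-\delta,\delta)$, and $|\Psi_\delta'|\le C_\Psi$, $|\Psi_\delta''|\le C_\Psi/\delta$ on $\mathbb{R}$ with $C_\Psi$ independent of $\delta$; $I_\delta:=\frac12\int_{\mathbb{R}}(\Psi_\delta'-\Psi_0')\,dr$. Unperturbed waves (standing hypothesis, a known result): there are constants $0<c_0<1$ and $x_0,r_0,d_0,D_0>0$ such that for every $c\in[c_0,1)$ the equation $a(k)=c$ has exactly one positive solution $k_c$, and there is a two-parameter family $\mathcal{R}_c$ of functions $R_0\in W^{2,\infty}(\mathbb{R})$ solving $c^2R_0''=\Delta_1(R_0-\mathrm{sgn}(R_0))$ with $R_0(0)=0$, given by $R_0=\bar R_0+\alpha(\cos(k_c\cdot)-1)+\beta\sin(k_c\cdot)$,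 $(\alpha,\beta)$ in an open neighbourhood $U_c$ of $0\in\mathbb{R}^2$, where $\bar R_0$ is a fixed member for which $\lim_{x\to+\infty}\bar R_0(x)$ exists and $\lim_{x\to-\infty}(\bar R_0(x)-\alpha_c^-(\cos(k_cx)-1)-\beta_c^-\sin(k_cx))$ exists for some constants $\alpha_c^-,\beta_c^-$. Every $R_0\in\mathcal{R}_c$ satisfies $\|R_0\|_\infty\le D_0(1-c^2)^{-1}$, $R_0(x)>r_0$ for $x>x_0$, $R_0(x)<-r_0$ for $x<-x_0$, $R_0'(x)>d_0$ for $|x|<x_0$. Setting: $c_1\in(c_0,1)$ fixed, $c\in[c_0,c_1]$, $R_0\in\mathcal{R}_c$ fixed. $\mathsf{X}:=\{S\in W^{2,\infty}(\mathbb{R}):S(0)=0,\ \lim_{x\to+\infty}S(x)\text{ exists}\}$. $\mathcal{G}(S)(x):=\Psi_\delta'(R_0(x)+S(x))-\Psi_0'(R_0(x))$. $S\in\mathsf{X}$ is called $\delta$-admissible if there exist $x_-<0<x_+$ with: $R_0(x_\pm)+S(x_\pm)=\pm\delta$; $R_0(x)+S(x)<-\delta$ for $x<x_-$; $R_0(x)+S(x)>\delta$ for $x>x_+$; and $\frac12R_0'(0)<R_0'(x)+S'(x)<2R_0'(0)$ for $x_-<x<x_+$. *)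

From Stdlib Require Import Reals Lra ClassicalEpsilon.
Open Scope R_scope.

(* sign function; Psi_0'(r) = sgn r (value 0 at r = 0, a null set). *)
Definition sgn (r : R) : R :=
  if Rlt_dec 0 r then 1 else if Rlt_dec r 0 then -1 else 0.

(* Riemann integral as a total function: the value of the integral when f is
   Riemann integrable on [a,b] (which is the case for every integrand used
   below); RiemannInt does not depend on the integrability proof. *)
Definition RInt (f : R -> R) (a b : R) : R :=
  epsilon (inhabits 0)
    (fun v => exists pr : Riemann_integrable f a b, RiemannInt pr = v).

Definition Aop (F : R -> R) (x : R) : R := RInt F (x - 1/2) (x + 1/2).

Definition Delta1 (F : R -> R) (x : R) : R := F (x + 1) - 2 * F x + F (x - 1).

Definition afun (k : R) : R := sin (k / 2) / (k / 2).

Definition bounded (f : R -> R) : Prop := exists M, forall x, Rabs (f x) <= M.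

(* f in W^{2,inf}(R), with f' its (classical) derivative: f bounded, f
   differentiable with derivative f', f' bounded and Lipschitz
   (i.e. f'' in L^inf). *)
Definition W2inf (f f' : R -> R) : Prop :=
  (forall x, derivable_pt_lim f x (f' x)) /\ bounded f /\ bounded f' /\
  exists L, forall x y, Rabs (f' x - f' y) <= L * Rabs (x - y).

(* ||f''||_inf <= M, expressed as: f' is M-Lipschitz *)
Definition second_deriv_bound (f' : R -> R) (M : R) : Prop :=
  forall x y, Rabs (f' x - f' y) <= M * Rabs (x - y).

Definition has_lim_pinf (f : R -> R) : Prop :=
  exists l, forall eps, eps > 0 -> exists M, forall x, x > M -> Rabs (f x - l) < eps.

Definition has_lim_minf (f : R -> R) : Prop :=
  exists l, forall eps, eps > 0 -> exists M, forall x, x < M -> Rabs (f x - l) < eps.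

Definition improper_int_R (f : R -> R) (v : R) : Prop :=
  (forall a b, inhabited (Riemann_integrable f a b)) /\
  forall eps, eps > 0 -> exists T, forall a b, a < - T -> b > T ->
    Rabs (RInt f a b - v) < eps.

Definition Idelta_is (dPsi : R -> R -> R) (delta v : R) : Prop :=
  exists w, improper_int_R (fun r => dPsi delta r - sgn r) w /\ v = w / 2.

Definition Rmem (Rbar : R -> R -> R) (kc : R -> R) (c alpha beta : R) (x : R) : R :=
  Rbar c x + alpha * (cos (kc c * x) - 1) + beta * sin (kc c * x).

Definition dRmem (dRbar : R -> R -> R) (kc : R -> R) (c alpha beta : R) (x : R) : R :=
  dRbar c x - alpha * kc c * sin (kc c * x) + beta * kc c * cos (kc c * x).

Definition Gop (dPsi : R -> R -> R) (delta : R) (R0 S : R -> R) (x : R) : R :=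
  dPsi delta (R0 x + S x) - sgn (R0 x).

Definition in_X (S S' : R -> R) : Prop :=
  W2inf S S' /\ S 0 = 0 /\ has_lim_pinf S.

Definition admissible (delta : R) (R0 R0' S S' : R -> R) : Prop :=
  exists xm xp, xm < 0 < xp /\
    R0 xp + S xp = delta /\ R0 xm + S xm = - delta /\
    (forall x, x < xm -> R0 x + S x < - delta) /\
    (forall x, x > xp -> R0 x + S x > delta) /\
    (forall x, xm < x < xp ->
       / 2 * R0' 0 < R0' x + S' x /\ R0' x + S' x < 2 * R0' 0).

(* Since R0 has the sign of x, G = Psi_delta'(phi) - sgn with
   phi = R0 + S, and admissibility makes G vanish outside a layer [xm, xp] on
   which phi rises from -delta to delta with slope at least R0'(0)/2 > d0/2;
   hence the layer has width at most 4 delta / d0 and |G| <= C_Psi + 1.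
   Averaging a bounded function supported on such an interval gives
   |A G| <= (C_Psi + 1) * width = O(delta).  For A^2 G one gains a second
   factor of the width from the orthogonality of G to phi': the integral of
   G phi' over the layer is Psi_delta(delta) - Psi_delta(-delta), which vanishes
   because I_delta = 0; comparing phi' with phi'(0) then bounds the total mass
   of G by a multiple of width^2, with a constant involving the Lipschitz
   constants of R0' (uniform in c, from the wave equation) and of S'. *)

From Stdlib Require Import Reals Lra FunctionalExtensionality ClassicalEpsilon.
From Coquelicot Require Import Coquelicot.
Open Scope R_scope.

Definition integral (f : R -> R) (a b : R) : R := RInt.RInt f a b.

Definition lipschitz (f : R -> R) (K : R) : Prop :=
  forall x y, Rabs (f x - f y) <= K * Rabs (x - y).

Lemma lipschitz_continuous (f : R -> R) (K : R) :
  lipschitz f K -> forall x, continuous f x.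
Proof.
  intros Hf x. apply continuity_pt_filterlim. intros eps Heps.
  assert (HK : 0 < Rabs K + 1) by (pose proof (Rabs_pos K); lra).
  exists (eps / (Rabs K + 1)). split.
  - apply Rdiv_lt_0_compat; lra.
  - intros y [_ Hy]. simpl in *. unfold R_dist in *.
    apply Rle_lt_trans with ((Rabs K + 1) * Rabs (y - x)).
    + eapply Rle_trans. apply Hf. apply Rmult_le_compat_r. apply Rabs_pos.
      pose proof (RRle_abs K). lra.
    + apply (Rmult_lt_compat_l (Rabs K + 1)) in Hy; [|lra].
      replace ((Rabs K + 1) * (eps / (Rabs K + 1))) with eps in Hy by (field; lra).
      exact Hy.
Qed.

Lemma continuous_ex_RInt (f : R -> R) :
  (forall x, continuous f x) -> forall a b, ex_RInt f a b.
Proof. intros Hf a b. apply (@ex_RInt_continuous R_CompleteNormedModule). intros; apply Hf. Qed.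

Lemma lipschitz_ex_RInt (f : R -> R) (K : R) :
  lipschitz f K -> forall a b, ex_RInt f a b.
Proof. intro Hf. apply continuous_ex_RInt, (lipschitz_continuous f K Hf). Qed.

Lemma derivable_continuous (f f' : R -> R) :
  (forall x, derivable_pt_lim f x (f' x)) -> forall x, continuous f x.
Proof.
  intros Hf x. apply continuity_pt_filterlim, derivable_continuous_pt.
  exists (f' x). apply Hf.
Qed.

Lemma lipschitz_nonneg (f : R -> R) (K : R) : lipschitz f K -> 0 <= K.
Proof.
  intro Hf. pose proof (Hf 1 0) as H. pose proof (Rabs_pos (f 1 - f 0)).
  replace (1 - 0) with 1 in H by ring. rewrite Rabs_R1 in H. lra.
Qed.

Lemma lipschitz_shift (f : R -> R) (K k : R) :
  lipschitz f K -> lipschitz (fun t => f (t + k)) K.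
Proof. intros Hf x y. replace (x - y) with ((x + k) - (y + k)) by ring. apply Hf. Qed.

Lemma lipschitz_plus (f g : R -> R) (K L : R) :
  lipschitz f K -> lipschitz g L -> lipschitz (fun t => f t + g t) (K + L).
Proof.
  intros Hf Hg x y.
  replace (f x + g x - (f y + g y)) with ((f x - f y) + (g x - g y)) by ring.
  eapply Rle_trans. apply Rabs_triang. pose proof (Hf x y). pose proof (Hg x y). lra.
Qed.

Lemma ex_RInt_Rplus (f g : R -> R) a b :
  ex_RInt f a b -> ex_RInt g a b -> ex_RInt (fun x => f x + g x) a b.
Proof. intros Hf Hg; exact (ex_RInt_plus f g a b Hf Hg). Qed.
Lemma ex_RInt_Rminus (f g : R -> R) a b :
  ex_RInt f a b -> ex_RInt g a b -> ex_RInt (fun x => f x - g x) a b.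
Proof. intros Hf Hg; exact (ex_RInt_minus f g a b Hf Hg). Qed.
Lemma ex_RInt_Rmult (f : R -> R) k a b : ex_RInt f a b -> ex_RInt (fun x => k * f x) a b.
Proof. intro Hf; exact (ex_RInt_scal f a b k Hf). Qed.
Lemma integral_ext (f g : R -> R) a b :
  (forall x, Rmin a b < x < Rmax a b -> f x = g x) -> integral f a b = integral g a b.
Proof. intro Hfg; exact (RInt_ext f g a b Hfg). Qed.
Lemma integral_abs_le_const (f : R -> R) a b K : a <= b -> ex_RInt f a b ->
  (forall t, a <= t <= b -> Rabs (f t) <= K) -> Rabs (integral f a b) <= (b - a) * K.
Proof. intros Hab Hf HK; exact (abs_RInt_le_const f a b K Hab Hf HK). Qed.
Lemma integral_plus (f g : R -> R) a b : ex_RInt f a b -> ex_RInt g a b ->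
  integral (fun x => f x + g x) a b = integral f a b + integral g a b.
Proof. intros Hf Hg; exact (RInt_plus f g a b Hf Hg). Qed.
Lemma integral_minus (f g : R -> R) a b : ex_RInt f a b -> ex_RInt g a b ->
  integral (fun x => f x - g x) a b = integral f a b - integral g a b.
Proof. intros Hf Hg; exact (RInt_minus f g a b Hf Hg). Qed.
Lemma integral_mult (f : R -> R) k a b :
  ex_RInt f a b -> integral (fun x => k * f x) a b = k * integral f a b.
Proof. intro Hf; exact (RInt_scal f a b k Hf). Qed.
Lemma integral_Chasles (f : R -> R) a b c :
  ex_RInt f a b -> ex_RInt f b c -> integral f a b + integral f b c = integral f a c.
Proof. intros Hab Hbc; exact (RInt_Chasles f a b c Hab Hbc). Qed.
Lemma integral_swap (f : R -> R) a b : ex_RInt f a b -> integral f b a = - integral f a b.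
Proof. intro Hf; symmetry; exact (opp_RInt_swap f a b Hf). Qed.
Lemma integral_const (k a b : R) : integral (fun _ => k) a b = (b - a) * k.
Proof. exact (RInt_const a b k). Qed.

Lemma integral_derivative (f df : R -> R) a b :
  (forall x, derivable_pt_lim f x (df x)) -> (forall x, continuous df x) ->
  integral df a b = f b - f a.
Proof.
  intros Hf Hdf. apply is_RInt_unique.
  apply (is_RInt_derive (V := R_CompleteNormedModule) f df a b).
  - intros x _. apply is_derive_Reals, Hf.
  - intros x _. apply Hdf.
Qed.

Lemma RInt_integral (f : R -> R) a b : ex_RInt f a b -> RInt f a b = integral f a b.
Proof.
  intros Hex. unfold RInt.
  assert (Hv : exists v, exists pr : Riemann_integrable f a b, RiemannInt pr = v).
  { exists (RiemannInt (ex_RInt_Reals_0 _ _ _ Hex)). eexists; reflexivity. }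
  destruct (epsilon_spec (inhabits 0) _ Hv) as [pr <-]. symmetry. apply RInt_Reals.
Qed.

Lemma integral_abs_bound (f : R -> R) a b K :
  ex_RInt f a b -> (forall t, Rabs (f t) <= K) -> Rabs (integral f a b) <= K * Rabs (b - a).
Proof.
  intros Hex HK. destruct (Rle_dec a b).
  - rewrite (Rabs_right (b - a)), Rmult_comm by lra. apply integral_abs_le_const; auto.
  - rewrite integral_swap by (apply ex_RInt_swap; auto).
    rewrite Rabs_Ropp, (Rabs_left (b - a)), Rmult_comm by lra.
    replace (- (b - a)) with (a - b) by ring.
    apply integral_abs_le_const; auto; [lra | apply ex_RInt_swap; auto].
Qed.

Lemma integral_vanishing (f : R -> R) u v :
  (forall s, Rmin u v < s < Rmax u v -> f s = 0) -> integral f u v = 0.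
Proof.
  intro Hf. rewrite (integral_ext f (fun _ => 0)) by exact Hf.
  rewrite integral_const. apply Rmult_0_r.
Qed.

Lemma integral_supported_bound (g : R -> R) p q K a b :
  p <= q -> a <= b -> (forall u v, ex_RInt g u v) ->
  (forall s, s < p \/ s > q -> g s = 0) -> (forall s, Rabs (g s) <= K) ->
  Rabs (integral g a b) <= K * (q - p).
Proof.
  intros Hpq Hab Hex Hg HK.
  assert (HK0 : 0 <= K) by (eapply Rle_trans; [apply Rabs_pos | apply (HK 0)]).
  assert (Hout : forall u v, u <= v -> (forall s, u < s < v -> s < p \/ s > q) ->
                 integral g u v = 0).
  { intros u v Hle Huv. apply integral_vanishing. intros s Hs.
    rewrite Rmin_left, Rmax_right in Hs by lra. apply Hg, Huv, Hs. }
  destruct (Rle_lt_dec b p) as [Hb | Hb].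
  { rewrite Hout, Rabs_R0 by (intros; lra). apply Rmult_le_pos; lra. }
  destruct (Rle_lt_dec q a) as [Ha | Ha].
  { rewrite Hout, Rabs_R0 by (intros; lra). apply Rmult_le_pos; lra. }
  set (a' := Rmax a p). set (b' := Rmin b q).
  assert (Ha' : a <= a' /\ p <= a') by (unfold a', Rmax; destruct Rle_dec; lra).
  assert (Hb' : b' <= b /\ b' <= q) by (unfold b', Rmin; destruct Rle_dec; lra).
  assert (Hab' : a' <= b') by (unfold a', b', Rmax, Rmin; repeat destruct Rle_dec; lra).
  rewrite <- (integral_Chasles g a a' b), <- (integral_Chasles g a' b' b) by auto.
  assert (Hleft : integral g a a' = 0).
  { apply Hout; [lra | intros s Hs; unfold a', Rmax in Hs; destruct Rle_dec; lra]. }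
  assert (Hright : integral g b' b = 0).
  { apply Hout; [lra | intros s Hs; unfold b', Rmin in Hs; destruct Rle_dec; lra]. }
  rewrite Hleft, Hright, Rplus_0_l, Rplus_0_r.
  eapply Rle_trans. apply integral_abs_le_const; auto.
  rewrite Rmult_comm. apply Rmult_le_compat_l; lra.
Qed.

Lemma sgn_pos x : 0 < x -> sgn x = 1.
Proof. intro; unfold sgn; destruct (Rlt_dec 0 x); [reflexivity | lra]. Qed.

Lemma sgn_neg x : x < 0 -> sgn x = -1.
Proof.
  intro; unfold sgn; destruct (Rlt_dec 0 x); [lra |].
  destruct (Rlt_dec x 0); [reflexivity | lra].
Qed.

Lemma sgn_abs_le x : Rabs (sgn x) <= 1.
Proof.
  unfold sgn; destruct (Rlt_dec 0 x); [| destruct (Rlt_dec x 0)];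
    unfold Rabs; destruct Rcase_abs; lra.
Qed.

Lemma ex_RInt_sgn_mul (f : R -> R) (k : R) :
  (forall x, continuous f x) -> forall u v, ex_RInt (fun s => sgn (s - k) * f s) u v.
Proof.
  intro Hf.
  assert (Hk : forall u, ex_RInt (fun s => sgn (s - k) * f s) u k).
  { intro u. destruct (Rtotal_order u k) as [Hu | [<- | Hu]].
    - apply ex_RInt_ext with (fun s => -1 * f s).
      + intros s Hs. rewrite Rmin_left, Rmax_right in Hs by lra.
        rewrite sgn_neg by lra. reflexivity.
      + apply ex_RInt_Rmult, continuous_ex_RInt, Hf.
    - apply ex_RInt_point.
    - apply ex_RInt_ext with f.
      + intros s Hs. rewrite Rmin_right, Rmax_left in Hs by lra.
        rewrite sgn_pos by lra. symmetry; apply Rmult_1_l.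
      + apply continuous_ex_RInt, Hf. }
  intros u v. apply ex_RInt_Chasles with k; [apply Hk | apply ex_RInt_swap, Hk].
Qed.

Lemma ex_RInt_sgn (k u v : R) : ex_RInt (fun s => sgn (s - k)) u v.
Proof.
  apply ex_RInt_ext with (fun s => sgn (s - k) * 1); [intros; apply Rmult_1_r |].
  apply (ex_RInt_sgn_mul (fun _ => 1)). intros; apply continuous_const.
Qed.

Lemma integral_supported_extend (g : R -> R) p q a b :
  a <= p <= q -> q <= b -> (forall u v, ex_RInt g u v) ->
  (forall s, s < p \/ s > q -> g s = 0) -> integral g a b = integral g p q.
Proof.
  intros Hap Hqb Hex Hg.
  rewrite <- (integral_Chasles g a p b), <- (integral_Chasles g p q b) by auto.
  assert (Hleft : integral g a p = 0).
  { apply integral_vanishing. intros s Hs.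
    rewrite Rmin_left, Rmax_right in Hs by lra. apply Hg; lra. }
  assert (Hright : integral g q b = 0).
  { apply integral_vanishing. intros s Hs.
    rewrite Rmin_left, Rmax_right in Hs by lra. apply Hg; lra. }
  rewrite Hleft, Hright, Rplus_0_l, Rplus_0_r. reflexivity.
Qed.

Lemma integral_sgn_symmetric (a : R) : 0 <= a -> integral sgn (- a) a = 0.
Proof.
  intro Ha.
  assert (Hex : forall u v, ex_RInt sgn u v).
  { intros u v. apply ex_RInt_ext with (fun s => sgn (s - 0)).
    - intros; rewrite Rminus_0_r; reflexivity.
    - apply ex_RInt_sgn. }
  rewrite <- (integral_Chasles sgn (- a) 0 a) by auto.
  rewrite (integral_ext sgn (fun _ => -1) (- a) 0), (integral_ext sgn (fun _ => 1) 0 a).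
  - rewrite !integral_const. ring.
  - intros x Hx; rewrite Rmin_left, Rmax_right in Hx by lra; apply sgn_pos; lra.
  - intros x Hx; rewrite Rmin_left, Rmax_right in Hx by lra; apply sgn_neg; lra.
Qed.

(* I_delta = 0 means that Psi_delta' and sgn have the same integral over
   (-delta, delta), i.e. Psi_delta takes the same value at -delta and delta. *)
Lemma potential_balanced (Psi dPsi : R -> R -> R) (delta : R) :
  delta > 0 -> (forall r, derivable_pt_lim (Psi delta) r (dPsi delta r)) ->
  (forall r, continuous (dPsi delta) r) ->
  (forall r, ~ (- delta < r < delta) -> dPsi delta r = sgn r) ->
  Idelta_is dPsi delta 0 -> Psi delta delta = Psi delta (- delta).
Proof.
  intros Hd HPsi HdPsi Hout [w [[Hint Hlim] Hw]].
  assert (w = 0) as -> by lra.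
  set (h := fun r => dPsi delta r - sgn r).
  assert (Hexh : forall u v, ex_RInt h u v).
  { intros u v. destruct (Hint u v) as [pr]. apply ex_RInt_Reals_1, pr. }
  assert (Hsupp : forall s, s < - delta \/ s > delta -> h s = 0).
  { intros s Hs. unfold h. rewrite Hout by lra. ring. }
  assert (Hmass : integral h (- delta) delta = 0).
  { destruct (Req_dec (integral h (- delta) delta) 0) as [E | E]; [exact E |].
    destruct (Hlim (Rabs (integral h (- delta) delta))) as [T HT]; [apply Rabs_pos_lt, E |].
    pose proof (Rle_abs T). pose proof (Rabs_pos T).
    specialize (HT (- (Rabs T + delta + 1)) (Rabs T + delta + 1) ltac:(lra) ltac:(lra)).
    rewrite RInt_integral, (integral_supported_extend h (- delta) delta), Rminus_0_r in HT
      by (auto; lra).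
    lra. }
  unfold h in Hmass. rewrite integral_minus in Hmass.
  - rewrite (integral_derivative (Psi delta) (dPsi delta)), integral_sgn_symmetric in Hmass
      by (auto; lra).
    lra.
  - apply continuous_ex_RInt, HdPsi.
  - apply ex_RInt_ext with (fun s => sgn (s - 0)); [intros; rewrite Rminus_0_r; reflexivity |].
    apply ex_RInt_sgn.
Qed.

(* Orthogonality relation: if phi increases through the layer from -delta to
   delta, crossing 0 at 0, then (Psi' o phi - sgn) is orthogonal to phi'.
   Indeed its integral against phi' is [Psi(phi) + phi] on (xm, 0) plus
   [Psi(phi) - phi] on (0, xp), that is Psi(delta) - Psi(-delta). *)
Lemma layer_orthogonality (Psi dPsi phi phi' : R -> R) (delta xm xp : R) :
  xm < 0 < xp ->
  (forall r, derivable_pt_lim Psi r (dPsi r)) -> (forall r, continuous dPsi r) ->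
  (forall x, derivable_pt_lim phi x (phi' x)) -> (forall x, continuous phi' x) ->
  phi xm = - delta -> phi 0 = 0 -> phi xp = delta -> Psi delta = Psi (- delta) ->
  integral (fun s => (dPsi (phi s) - sgn s) * phi' s) xm xp = 0.
Proof.
  intros [Hxm Hxp] HPsi HdPsi Hphi Hphi' Hm H0 Hp Hbal.
  set (g := fun s => (dPsi (phi s) - sgn s) * phi' s).
  set (gm := fun s => dPsi (phi s) * phi' s + phi' s).
  set (gp := fun s => dPsi (phi s) * phi' s - phi' s).
  assert (Hchain : forall x, derivable_pt_lim (fun s => Psi (phi s)) x (dPsi (phi x) * phi' x)).
  { intro x. apply (derivable_pt_lim_comp phi Psi); auto. }
  assert (HdPsiphi : forall x, continuous (fun s => dPsi (phi s) * phi' s) x).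
  { intro x. apply (continuous_mult (K := R_AbsRing)); auto.
    apply continuous_comp; auto. apply (derivable_continuous phi phi' Hphi). }
  assert (Hgm : forall x, continuous gm x).
  { intro x. apply (continuous_plus (V := R_NormedModule)); auto. }
  assert (Hgp : forall x, continuous gp x).
  { intro x. apply (continuous_minus (V := R_NormedModule)); auto. }
  assert (Eleft : forall s, Rmin xm 0 < s < Rmax xm 0 -> g s = gm s).
  { intros s Hs. rewrite Rmin_left, Rmax_right in Hs by lra.
    unfold g, gm. rewrite sgn_neg by lra. ring. }
  assert (Eright : forall s, Rmin 0 xp < s < Rmax 0 xp -> g s = gp s).
  { intros s Hs. rewrite Rmin_left, Rmax_right in Hs by lra.
    unfold g, gp. rewrite sgn_pos by lra. ring. }
  rewrite <- (integral_Chasles g xm 0 xp).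
  - rewrite (integral_ext g gm xm 0 Eleft), (integral_ext g gp 0 xp Eright).
    rewrite (integral_derivative (fun s => Psi (phi s) + phi s) gm),
      (integral_derivative (fun s => Psi (phi s) - phi s) gp); auto.
    + rewrite Hm, H0, Hp, Hbal. ring.
    + intro x. apply (derivable_pt_lim_minus (fun s => Psi (phi s)) phi); auto.
    + intro x. apply (derivable_pt_lim_plus (fun s => Psi (phi s)) phi); auto.
  - apply ex_RInt_ext with gm; [intros; symmetry; auto | apply continuous_ex_RInt, Hgm].
  - apply ex_RInt_ext with gp; [intros; symmetry; auto | apply continuous_ex_RInt, Hgp].
Qed.

(* R0 has the sign of x: it is increasing near 0 and bounded away from 0 far out. *)
Lemma wave_sign (R0 R0' : R -> R) (x0 r0 d0 : R) :
  r0 > 0 -> d0 > 0 -> (forall x, derivable_pt_lim R0 x (R0' x)) -> R0 0 = 0 ->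
  (forall x, x > x0 -> R0 x > r0) -> (forall x, x < - x0 -> R0 x < - r0) ->
  (forall x, Rabs x < x0 -> R0' x > d0) ->
  forall s, sgn (R0 s) = sgn s.
Proof.
  intros Hr0 Hd0 HR0 H0 Hpos Hneg Hder s.
  destruct (Rtotal_order s 0) as [Hs | [-> | Hs]].
  - rewrite (sgn_neg s Hs). apply sgn_neg.
    destruct (Rlt_le_dec s (- x0)) as [Hfar | Hnear]; [pose proof (Hneg s Hfar); lra |].
    destruct (MVT_cor2 R0 R0' s 0 Hs (fun c _ => HR0 c)) as [xi [Hxi [Hxi1 Hxi2]]].
    assert (R0' xi > d0) by (apply Hder; rewrite Rabs_left by lra; lra).
    assert (0 < R0' xi * (0 - s)) by (apply Rmult_lt_0_compat; lra). lra.
  - rewrite H0. reflexivity.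
  - rewrite (sgn_pos s Hs). apply sgn_pos.
    destruct (Rlt_le_dec x0 s) as [Hfar | Hnear]; [pose proof (Hpos s Hfar); lra |].
    destruct (MVT_cor2 R0 R0' 0 s Hs (fun c _ => HR0 c)) as [xi [Hxi [Hxi1 Hxi2]]].
    assert (R0' xi > d0) by (apply Hder; rewrite Rabs_right by lra; lra).
    assert (0 < R0' xi * (s - 0)) by (apply Rmult_lt_0_compat; lra). lra.
Qed.

Lemma wave_source_bounds (R0 : R -> R) (B : R) :
  (forall x, continuous R0 x) -> (forall s, sgn (R0 s) = sgn s) ->
  (forall x, Rabs (R0 x) <= B) ->
  (forall u v, ex_RInt (Delta1 (fun t => R0 t - sgn (R0 t))) u v) /\
  (forall t, Rabs (Delta1 (fun t => R0 t - sgn (R0 t)) t) <= 4 * (B + 1)).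
Proof.
  intros HR0 Hsign HB.
  assert (E : forall t, Delta1 (fun t => R0 t - sgn (R0 t)) t =
    (R0 (t + 1) - sgn (t - -1)) - 2 * (R0 t - sgn (t - 0)) + (R0 (t - 1) - sgn (t - 1))).
  { intro t. unfold Delta1. rewrite !Hsign.
    replace (t - -1) with (t + 1) by ring. rewrite Rminus_0_r. reflexivity. }
  split.
  - intros u v. apply ex_RInt_ext with (fun t =>
      (R0 (t + 1) - sgn (t - -1)) - 2 * (R0 t - sgn (t - 0)) + (R0 (t - 1) - sgn (t - 1))).
    { intros t _. symmetry. apply E. }
    assert (Hshift : forall k, ex_RInt (fun t => R0 (t + k)) u v).
    { intro k. apply continuous_ex_RInt. intro t.
      apply (continuous_comp (fun t => t + k) R0); [| apply HR0].
      apply (continuous_plus (V := R_NormedModule));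
        [apply continuous_id | apply continuous_const]. }
    pose proof (ex_RInt_Rminus _ _ u v (Hshift 1) (ex_RInt_sgn (-1) u v)) as H1.
    pose proof (ex_RInt_Rminus _ _ u v (continuous_ex_RInt R0 HR0 u v) (ex_RInt_sgn 0 u v)) as H2.
    pose proof (ex_RInt_Rminus _ _ u v (Hshift (-1)) (ex_RInt_sgn 1 u v)) as H3.
    exact (ex_RInt_Rplus _ _ u v (ex_RInt_Rminus _ _ u v H1 (ex_RInt_Rmult _ 2 u v H2)) H3).
  - intro t. rewrite E.
    assert (Hterm : forall x k, Rabs (R0 x - sgn k) <= B + 1).
    { intros x k. eapply Rle_trans; [apply Rabs_triang |].
      rewrite Rabs_Ropp. pose proof (HB x). pose proof (sgn_abs_le k). lra. }
    pose proof (Hterm (t + 1) (t - -1)). pose proof (Hterm t (t - 0)).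
    pose proof (Hterm (t - 1) (t - 1)).
    revert H H0 H1.
    generalize (R0 (t + 1) - sgn (t - -1)) (R0 t - sgn (t - 0)) (R0 (t - 1) - sgn (t - 1)).
    intros a b c Ha Hb Hc. unfold Rabs in *. repeat destruct Rcase_abs; lra.
Qed.

Lemma lipschitz_of_integral_identity (f' Q : R -> R) (k B : R) :
  0 < k -> (forall u v, ex_RInt Q u v) -> (forall t, Rabs (Q t) <= B) ->
  (forall x y, k * (f' y - f' x) = integral Q x y) -> lipschitz f' (B / k).
Proof.
  intros Hk HQ HB Hid x y.
  pose proof (integral_abs_bound Q y x B (HQ y x) HB) as H.
  rewrite <- Hid, Rabs_mult, (Rabs_right k) in H by lra.
  apply (Rmult_le_reg_l k); [exact Hk |].
  replace (k * (B / k * Rabs (x - y))) with (B * Rabs (x - y)) by (field; lra).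
  exact H.
Qed.

Lemma lipschitz_weaken (f : R -> R) (K K' : R) :
  K <= K' -> lipschitz f K -> lipschitz f K'.
Proof.
  intros HK Hf x y. eapply Rle_trans; [apply Hf |].
  apply Rmult_le_compat_r; [apply Rabs_pos | exact HK].
Qed.

(* The wave equation c^2 R0'' = Delta_1 (R0 - sgn R0) makes R0' Lipschitz with a
   constant depending only on c0 and on a bound for R0. *)
Lemma wave_derivative_lipschitz (R0 R0' : R -> R) (c c0 B : R) :
  0 < c0 <= c -> (forall x, continuous R0 x) -> (forall s, sgn (R0 s) = sgn s) ->
  (forall x, Rabs (R0 x) <= B) ->
  (forall x y, c ^ 2 * (R0' y - R0' x) = RInt (Delta1 (fun t => R0 t - sgn (R0 t))) x y) ->
  lipschitz R0' (4 * (B + 1) / c0 ^ 2).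
Proof.
  intros Hc HR0 Hsign HB Heq.
  destruct (wave_source_bounds R0 B HR0 Hsign HB) as [Hint Hbound].
  assert (HB0 : 0 <= B + 1) by (pose proof (HB 0); pose proof (Rabs_pos (R0 0)); lra).
  apply lipschitz_weaken with (4 * (B + 1) / c ^ 2).
  - unfold Rdiv. apply Rmult_le_compat_l; [lra |].
    apply Rinv_le_contravar; [nra | nra].
  - apply (lipschitz_of_integral_identity R0' (Delta1 (fun t => R0 t - sgn (R0 t))) (c ^ 2));
      auto; [nra |].
    intros x y. rewrite Heq. apply RInt_integral, Hint.
Qed.

Definition ramp (p q t : R) : R := (Rmax p (Rmin q t) - p) / (q - p).

Lemma ramp_left p q t : p < q -> t <= p -> ramp p q t = 0.
Proof.
  intros Hpq Ht. unfold ramp.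
  replace (Rmax p (Rmin q t)) with p by (unfold Rmax, Rmin; repeat destruct Rle_dec; lra).
  unfold Rdiv. ring.
Qed.

Lemma ramp_right p q t : p < q -> q <= t -> ramp p q t = 1.
Proof.
  intros Hpq Ht. unfold ramp.
  replace (Rmax p (Rmin q t)) with q by (unfold Rmax, Rmin; repeat destruct Rle_dec; lra).
  field. lra.
Qed.

Lemma ramp_range p q t : p < q -> 0 <= ramp p q t <= 1.
Proof.
  intro Hpq. unfold ramp.
  assert (H : p <= Rmax p (Rmin q t) <= q) by (unfold Rmax, Rmin; repeat destruct Rle_dec; lra).
  split.
  - apply Rdiv_le_0_compat; lra.
  - apply Rmult_le_reg_r with (q - p); [lra |].
    unfold Rdiv. rewrite Rmult_assoc, Rinv_l; lra.
Qed.

Lemma ramp_lipschitz p q : p < q -> lipschitz (ramp p q) (/ (q - p)).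
Proof.
  intros Hpq x y. unfold ramp.
  replace ((Rmax p (Rmin q x) - p) / (q - p) - (Rmax p (Rmin q y) - p) / (q - p))
    with (/ (q - p) * (Rmax p (Rmin q x) - Rmax p (Rmin q y))) by (field; lra).
  rewrite Rabs_mult, (Rabs_right (/ (q - p))) by (left; apply Rinv_0_lt_compat; lra).
  apply Rmult_le_compat_l; [left; apply Rinv_0_lt_compat; lra |].
  unfold Rmax, Rmin. repeat destruct Rle_dec; unfold Rabs; repeat destruct Rcase_abs; lra.
Qed.

(* A G is controlled by K (q - p); A^2 G is controlled
   by the total mass of G plus a term quadratic in the support length: writing
   the primitive F of G as (mass) * ramp + D, with D supported in [p, q],
   A^2 G(x) = int (F(t + 1/2) - F(t - 1/2)) dt splits accordingly. *)
Section Averaging_compact_support.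

Variables (G : R -> R) (p q K : R).
Hypothesis p_lt_q : p < q.
Hypothesis G_integrable : forall u v, ex_RInt G u v.
Hypothesis G_support : forall s, s < p \/ s > q -> G s = 0.
Hypothesis G_bound : forall s, Rabs (G s) <= K.

Let F (t : R) : R := integral G p t.

Lemma Aop_primitive t : Aop G t = F (t + 1/2) - F (t - 1/2).
Proof.
  unfold Aop, F. rewrite RInt_integral by auto.
  rewrite <- (integral_Chasles G (t - 1/2) p (t + 1/2)) by auto.
  rewrite (integral_swap G p (t - 1/2)) by auto. ring.
Qed.

Lemma primitive_lipschitz : lipschitz F K.
Proof.
  intros u v. unfold F.
  rewrite <- (integral_Chasles G p v u) by auto.
  replace (integral G p v + integral G v u - integral G p v) with (integral G v u) by ring.
  apply integral_abs_bound; auto.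
Qed.

Lemma primitive_left t : t <= p -> F t = 0.
Proof.
  intro Ht. unfold F. apply integral_vanishing. intros s Hs.
  rewrite Rmin_right, Rmax_left in Hs by lra. apply G_support. lra.
Qed.

Lemma primitive_right t : q <= t -> F t = integral G p q.
Proof. intro Ht. apply integral_supported_extend; auto; lra. Qed.

Lemma primitive_bound t : Rabs (F t) <= K * (q - p).
Proof.
  destruct (Rle_lt_dec t p) as [Ht | Ht].
  - rewrite primitive_left, Rabs_R0 by exact Ht.
    pose proof (G_bound 0). pose proof (Rabs_pos (G 0)). apply Rmult_le_pos; lra.
  - apply integral_supported_bound; auto; lra.
Qed.

Lemma Aop_supported_bound x : Rabs (Aop G x) <= K * (q - p).
Proof. unfold Aop. rewrite RInt_integral by auto. apply integral_supported_bound; auto; lra. Qed.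

Lemma Aop2_supported_bound x :
  Rabs (Aop (Aop G) x) <= Rabs (integral G p q) + 4 * K * (q - p) ^ 2.
Proof.
  set (I := integral G p q).
  set (D := fun t => F t - I * ramp p q t).
  assert (HI : Rabs I <= K * (q - p)) by (unfold I; rewrite <- (primitive_right q) by lra;
    apply primitive_bound).
  assert (HF : forall k u v, ex_RInt (fun t => F (t + k)) u v)
    by (intro k; apply (lipschitz_ex_RInt _ K), lipschitz_shift, primitive_lipschitz).
  assert (Hramp : forall k u v, ex_RInt (fun t => ramp p q (t + k)) u v)
    by (intro k; apply (lipschitz_ex_RInt _ (/ (q - p))), lipschitz_shift, ramp_lipschitz, p_lt_q).
  assert (HD : forall k u v, ex_RInt (fun t => D (t + k)) u v)
    by (intros k u v; apply ex_RInt_Rminus; [apply HF | apply ex_RInt_Rmult, Hramp]).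
  (* the remainder D is supported in [p, q] and bounded by 2 K (q - p) *)
  assert (HDint : forall k, Rabs (integral (fun t => D (t + k)) (x - 1/2) (x + 1/2))
                            <= 2 * K * (q - p) * (q - p)).
  { intro k. replace (2 * K * (q - p) * (q - p)) with (2 * K * (q - p) * ((q - k) - (p - k)))
      by ring.
    apply integral_supported_bound; auto; try lra.
    - intros s [Hs | Hs]; unfold D.
      + rewrite primitive_left, ramp_left by lra. ring.
      + rewrite primitive_right, ramp_right by lra. fold I. ring.
    - intro s. unfold D. eapply Rle_trans; [apply Rabs_triang |].
      rewrite Rabs_Ropp, Rabs_mult. pose proof (primitive_bound (s + k)).
      pose proof (ramp_range p q (s + k) p_lt_q).
      assert (Rabs I * Rabs (ramp p q (s + k)) <= K * (q - p)).
      { rewrite (Rabs_right (ramp _ _ _)) by lra.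
        apply Rle_trans with (Rabs I * 1); [| lra].
        apply Rmult_le_compat_l; [apply Rabs_pos | lra]. }
      lra. }
  assert (Hlin : Rabs (integral (fun t => ramp p q (t + 1/2) - ramp p q (t - 1/2))
                                (x - 1/2) (x + 1/2))
                 <= 1).
  { eapply Rle_trans; [apply (integral_abs_le_const _ _ _ 1) | lra]; [lra | |].
    - apply ex_RInt_Rminus; apply Hramp.
    - intros t _. pose proof (ramp_range p q (t + 1/2) p_lt_q).
      pose proof (ramp_range p q (t - 1/2) p_lt_q).
      unfold Rabs; destruct Rcase_abs; lra. }
  unfold Aop at 1.
  rewrite (functional_extensionality (Aop G) _ Aop_primitive).
  rewrite RInt_integral by (apply ex_RInt_Rminus; apply HF).
  pose proof (HD (1/2) (x - 1/2) (x + 1/2)) as HD1.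
  assert (HD2 : ex_RInt (fun t => D (t - 1/2)) (x - 1/2) (x + 1/2)) by exact (HD (- (1/2)) _ _).
  assert (Hramp_diff : ex_RInt (fun t => ramp p q (t + 1/2) - ramp p q (t - 1/2))
                               (x - 1/2) (x + 1/2))
    by (apply ex_RInt_Rminus; apply Hramp).
  rewrite (integral_ext _ (fun t => I * (ramp p q (t + 1/2) - ramp p q (t - 1/2))
                                + (D (t + 1/2) - D (t - 1/2))))
    by (intros t _; unfold D; ring).
  rewrite (integral_plus _ _ _ _ (ex_RInt_Rmult _ I _ _ Hramp_diff)
                                 (ex_RInt_Rminus _ _ _ _ HD1 HD2)),
    (integral_mult _ I _ _ Hramp_diff), (integral_minus _ _ _ _ HD1 HD2).
  assert (Hmass : Rabs (I * integral (fun t => ramp p q (t + 1/2) - ramp p q (t - 1/2))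
                                     (x - 1/2) (x + 1/2)) <= Rabs I).
  { rewrite Rabs_mult. apply Rle_trans with (Rabs I * 1); [| lra].
    apply Rmult_le_compat_l; [apply Rabs_pos | exact Hlin]. }
  assert (Hrem : Rabs (integral (fun t => D (t + 1/2)) (x - 1/2) (x + 1/2)
                       - integral (fun t => D (t - 1/2)) (x - 1/2) (x + 1/2))
                 <= 4 * K * (q - p) ^ 2).
  { eapply Rle_trans; [apply Rabs_triang |]. rewrite Rabs_Ropp.
    assert (Hminus : Rabs (integral (fun t => D (t - 1/2)) (x - 1/2) (x + 1/2))
                     <= 2 * K * (q - p) * (q - p)) by exact (HDint (- (1/2))).
    pose proof (HDint (1/2)).
    replace (4 * K * (q - p) ^ 2) with (2 * K * (q - p) * (q - p) + 2 * K * (q - p) * (q - p))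
      by ring.
    lra. }
  eapply Rle_trans; [apply Rabs_triang | lra].
Qed.

Lemma supported_mass_bound (g : R -> R) (L m : R) :
  p <= 0 <= q -> lipschitz g L -> 0 < m -> m <= g 0 ->
  ex_RInt (fun s => G s * g s) p q -> integral (fun s => G s * g s) p q = 0 ->
  Rabs (integral G p q) <= K * L * (q - p) ^ 2 / m.
Proof.
  intros H0 Hg Hm Hg0 Hint Horth.
  assert (E : integral G p q = integral (fun s => G s - / g 0 * (G s * g s)) p q).
  { rewrite integral_minus, integral_mult, Horth by (auto; apply ex_RInt_Rmult; auto).
    ring. }
  rewrite E.
  replace (K * L * (q - p) ^ 2 / m) with ((q - p) * (K * (L * (q - p)) * / m)) by (field; lra).
  apply integral_abs_le_const; [lra | apply ex_RInt_Rminus; [auto | apply ex_RInt_Rmult; auto] |].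
  intros t Ht.
  replace (G t - / g 0 * (G t * g t)) with (G t * (g 0 - g t) * / g 0) by (field; lra).
  rewrite !Rabs_mult, (Rabs_right (/ g 0)) by (left; apply Rinv_0_lt_compat; lra).
  assert (Hdiff : Rabs (g 0 - g t) <= L * (q - p)).
  { eapply Rle_trans; [apply Hg |]. pose proof (lipschitz_nonneg g L Hg).
    apply Rmult_le_compat_l; [lra |]. unfold Rabs; destruct Rcase_abs; lra. }
  apply Rmult_le_compat.
  - apply Rmult_le_pos; apply Rabs_pos.
  - left; apply Rinv_0_lt_compat; lra.
  - apply Rmult_le_compat; auto; apply Rabs_pos.
  - apply Rinv_le_contravar; lra.
Qed.

End Averaging_compact_support.

Section Transition_layer.

Variables (Psi dPsi phi phi' : R -> R) (delta CPsi m xm xp : R).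
Hypothesis delta_pos : 0 < delta.
Hypothesis m_pos : 0 < m.
Hypothesis layer_ends : xm < 0 < xp.
Hypothesis Psi_derivative : forall r, derivable_pt_lim Psi r (dPsi r).
Hypothesis dPsi_continuous : forall r, continuous dPsi r.
Hypothesis dPsi_outside : forall r, ~ (- delta < r < delta) -> dPsi r = sgn r.
Hypothesis dPsi_bound : forall r, Rabs (dPsi r) <= CPsi.
Hypothesis Psi_balanced : Psi delta = Psi (- delta).
Hypothesis phi_derivative : forall x, derivable_pt_lim phi x (phi' x).
Hypothesis phi_zero : phi 0 = 0.
Hypothesis phi_left_end : phi xm = - delta.
Hypothesis phi_right_end : phi xp = delta.
Hypothesis phi_left : forall x, x < xm -> phi x < - delta.
Hypothesis phi_right : forall x, x > xp -> phi x > delta.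
Hypothesis phi'_lower : forall x, xm < x < xp -> m <= phi' x.

Let G (s : R) : R := dPsi (phi s) - sgn s.

Lemma layer_support s : s < xm \/ s > xp -> G s = 0.
Proof.
  intros [Hs | Hs]; unfold G.
  - pose proof (phi_left s Hs). rewrite dPsi_outside, !sgn_neg by lra. ring.
  - pose proof (phi_right s Hs). rewrite dPsi_outside, !sgn_pos by lra. ring.
Qed.

Lemma layer_G_bound s : Rabs (G s) <= CPsi + 1.
Proof.
  unfold G. eapply Rle_trans; [apply Rabs_triang |]. rewrite Rabs_Ropp.
  pose proof (dPsi_bound (phi s)). pose proof (sgn_abs_le s). lra.
Qed.

Lemma layer_G_integrable u v : ex_RInt G u v.
Proof.
  apply ex_RInt_ext with (fun s => dPsi (phi s) - sgn (s - 0)).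
  - intros s _. unfold G. rewrite Rminus_0_r. reflexivity.
  - apply ex_RInt_Rminus; [| apply ex_RInt_sgn].
    apply continuous_ex_RInt. intro x. apply continuous_comp; [| apply dPsi_continuous].
    apply (derivable_continuous phi phi' phi_derivative).
Qed.

(* phi rises by 2 delta across the layer with slope at least m. *)
Lemma layer_width : (xp - xm) * m <= 2 * delta.
Proof.
  destruct (MVT_cor2 phi phi' xm xp ltac:(lra) (fun c _ => phi_derivative c))
    as [xi [Hrise Hxi]].
  rewrite phi_left_end, phi_right_end in Hrise. pose proof (phi'_lower xi Hxi).
  assert ((xp - xm) * m <= (xp - xm) * phi' xi) by (apply Rmult_le_compat_l; lra).
  lra.
Qed.

Lemma layer_width_bound : xp - xm <= 2 * delta / m.
Proof.
  apply (Rmult_le_reg_r m); [exact m_pos |].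
  replace (2 * delta / m * m) with (2 * delta) by (field; lra). apply layer_width.
Qed.

Lemma layer_Aop_bound x : Rabs (Aop G x) <= (CPsi + 1) * (2 * delta / m).
Proof.
  eapply Rle_trans; [apply (Aop_supported_bound G xm xp (CPsi + 1)) |].
  - lra.
  - apply layer_G_integrable.
  - apply layer_support.
  - apply layer_G_bound.
  - apply Rmult_le_compat_l; [pose proof (layer_G_bound 0); pose proof (Rabs_pos (G 0)); lra |].
    apply layer_width_bound.
Qed.

Lemma layer_Aop2_bound L :
  lipschitz phi' L ->
  forall x, Rabs (Aop (Aop G) x) <= (CPsi + 1) * (L / m + 4) * (2 * delta / m) ^ 2.
Proof.
  intros Hphi' x.
  set (C1 := CPsi + 1). set (ell := xp - xm).
  assert (HC1 : 0 <= C1)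
    by (pose proof (layer_G_bound 0); pose proof (Rabs_pos (G 0)); unfold C1; lra).
  assert (HL : 0 <= L) by exact (lipschitz_nonneg phi' L Hphi').
  assert (Hcont : forall x, continuous phi' x) by exact (lipschitz_continuous phi' L Hphi').
  assert (Hell : 0 <= ell <= 2 * delta / m) by (split; [unfold ell; lra | apply layer_width_bound]).
  assert (Hell2 : ell ^ 2 <= (2 * delta / m) ^ 2) by (apply pow_incr; exact Hell).
  assert (Hmass : Rabs (integral G xm xp) <= C1 * L * ell ^ 2 / m).
  { apply (supported_mass_bound G xm xp C1 ltac:(lra) layer_G_integrable layer_G_bound phi' L m);
      try lra.
    - exact Hphi'.
    - apply phi'_lower. lra.
    - apply ex_RInt_ext with (fun s => dPsi (phi s) * phi' s - sgn (s - 0) * phi' s).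
      + intros s _. unfold G. rewrite Rminus_0_r. symmetry. apply Rmult_minus_distr_r.
      + apply ex_RInt_Rminus; [| apply ex_RInt_sgn_mul, Hcont].
        apply continuous_ex_RInt. intro y.
        apply (continuous_mult (K := R_AbsRing)); [| apply Hcont].
        apply continuous_comp; [| apply dPsi_continuous].
        apply (derivable_continuous phi phi' phi_derivative).
    - exact (layer_orthogonality Psi dPsi phi phi' delta xm xp layer_ends Psi_derivative
               dPsi_continuous phi_derivative Hcont phi_left_end phi_zero phi_right_end
               Psi_balanced). }
  eapply Rle_trans; [apply (Aop2_supported_bound G xm xp C1) |].
  - lra.
  - apply layer_G_integrable.
  - apply layer_support.
  - apply layer_G_bound.
  - fold ell. replace (C1 * (L / m + 4) * (2 * delta / m) ^ 2)
      with (C1 * L / m * (2 * delta / m) ^ 2 + 4 * C1 * (2 * delta / m) ^ 2) by (field; lra).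
    assert (C1 * L * ell ^ 2 / m <= C1 * L / m * (2 * delta / m) ^ 2).
    { replace (C1 * L * ell ^ 2 / m) with (C1 * L / m * ell ^ 2) by (field; lra).
      apply Rmult_le_compat_l; [| exact Hell2].
      apply Rmult_le_pos; [apply Rmult_le_pos; lra | left; apply Rinv_0_lt_compat; lra]. }
    assert (4 * C1 * ell ^ 2 <= 4 * C1 * (2 * delta / m) ^ 2) by (apply Rmult_le_compat_l; lra).
    lra.
Qed.

End Transition_layer.

(* The constant C_G: with a layer of width at most 4 delta / d0 and R0 + S
   Lipschitz with constant L0 + M, the layer bounds are absorbed into C_G. *)
Lemma layer_constants (C d L M delta : R) :
  0 <= C -> 0 < d -> 0 <= L -> 0 <= M -> 0 < delta ->
  let CG := C * (4 / d + (2 * (L + 1) / d + 4) * (4 / d) ^ 2) in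
  C * (2 * delta / (d / 2)) <= CG * delta /\
  C * ((L + M) / (d / 2) + 4) * (2 * delta / (d / 2)) ^ 2 <= CG * (1 + M) * delta ^ 2.
Proof.
  intros HC Hd HL HM Hdelta CG. unfold CG.
  set (k := / d). assert (Hk : 0 < k) by (apply Rinv_0_lt_compat; lra).
  replace (2 * delta / (d / 2)) with (4 * k * delta) by (unfold k; field; lra).
  replace ((L + M) / (d / 2)) with (2 * (L + M) * k) by (unfold k; field; lra).
  replace (4 / d) with (4 * k) by (unfold k; field; lra).
  replace (2 * (L + 1) / d) with (2 * (L + 1) * k) by (unfold k; field; lra).
  assert (Hslope : 2 * (L + M) * k + 4 <= (2 * (L + 1) * k + 4) * (1 + M)).
  { assert (0 <= M * (2 * L * k + 4)) by (apply Rmult_le_pos; [lra | nra]). nra. }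
  assert (Hpos : 0 <= C * ((2 * (L + 1) * k + 4) * (4 * k) ^ 2)).
  { apply Rmult_le_pos; [lra |]. apply Rmult_le_pos; [nra | apply pow2_ge_0]. }
  split.
  - nra.
  - replace (C * (2 * (L + M) * k + 4) * (4 * k * delta) ^ 2)
      with (C * (4 * k) ^ 2 * delta ^ 2 * (2 * (L + M) * k + 4)) by ring.
    assert (H : C * (4 * k) ^ 2 * delta ^ 2 * (2 * (L + M) * k + 4)
                <= C * (4 * k) ^ 2 * delta ^ 2 * ((2 * (L + 1) * k + 4) * (1 + M))).
    { apply Rmult_le_compat_l; [| exact Hslope].
      repeat apply Rmult_le_pos; try lra; apply pow2_ge_0. }
    assert (0 <= C * (4 * k) * (1 + M) * delta ^ 2)
      by (repeat apply Rmult_le_pos; try lra; apply pow2_ge_0).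
    nra.
Qed.

Theorem corollary3p4
  (* the family of potentials (Psi_delta)_{delta>0}, with derivatives *)
  (Psi dPsi ddPsi : R -> R -> R) (CPsi : R)
  (HPsi1 : forall delta, delta > 0 -> forall r, derivable_pt_lim (Psi delta) r (dPsi delta r))
  (HPsi2 : forall delta, delta > 0 -> forall r, derivable_pt_lim (dPsi delta) r (ddPsi delta r))
  (HPsi3 : forall delta, delta > 0 -> continuity (ddPsi delta))
  (HPsi4 : forall delta, delta > 0 -> forall r, ~ (- delta < r < delta) -> dPsi delta r = sgn r)
  (HPsi5 : forall delta, delta > 0 -> forall r, Rabs (dPsi delta r) <= CPsi)
  (HPsi6 : forall delta, delta > 0 -> forall r, Rabs (ddPsi delta r) <= CPsi / delta)
  (* standing hypothesis: the unperturbed waves *)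
  (c0 x0 r0 d0 D0 : R) (kc : R -> R) (Rbar dRbar : R -> R -> R)
  (U : R -> R -> R -> Prop) (alm blm : R -> R)
  (Hc0 : 0 < c0 < 1) (Hx0 : x0 > 0) (Hr0 : r0 > 0) (Hd0 : d0 > 0) (HD0 : D0 > 0)
  (Hkc : forall c, c0 <= c < 1 ->
     kc c > 0 /\ afun (kc c) = c /\ forall k, k > 0 -> afun k = c -> k = kc c)
  (HU0 : forall c, c0 <= c < 1 -> U c 0 0)
  (HUopen : forall c, c0 <= c < 1 -> forall a b, U c a b ->
     exists eps, eps > 0 /\ forall a' b', Rabs (a' - a) < eps -> Rabs (b' - b) < eps -> U c a' b')
  (HRbar_p : forall c, c0 <= c < 1 -> has_lim_pinf (Rbar c))
  (HRbar_m : forall c, c0 <= c < 1 -> has_lim_minf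
     (fun x => Rbar c x - alm c * (cos (kc c * x) - 1) - blm c * sin (kc c * x)))
  (HW2 : forall c, c0 <= c < 1 -> forall a b, U c a b ->
     W2inf (Rmem Rbar kc c a b) (dRmem dRbar kc c a b))
  (HR00 : forall c, c0 <= c < 1 -> forall a b, U c a b -> Rmem Rbar kc c a b 0 = 0)
  (Heq : forall c, c0 <= c < 1 -> forall a b, U c a b -> forall x y,
     c ^ 2 * (dRmem dRbar kc c a b y - dRmem dRbar kc c a b x) =
     RInt (Delta1 (fun t => Rmem Rbar kc c a b t - sgn (Rmem Rbar kc c a b t))) x y)
  (Hbnd : forall c, c0 <= c < 1 -> forall a b, U c a b -> forall x,
     Rabs (Rmem Rbar kc c a b x) <= D0 / (1 - c ^ 2))
  (Hpos : forall c, c0 <= c < 1 -> forall a b, U c a b -> forall x,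
     x > x0 -> Rmem Rbar kc c a b x > r0)
  (Hneg : forall c, c0 <= c < 1 -> forall a b, U c a b -> forall x,
     x < - x0 -> Rmem Rbar kc c a b x < - r0)
  (Hder : forall c, c0 <= c < 1 -> forall a b, U c a b -> forall x,
     Rabs x < x0 -> dRmem dRbar kc c a b x > d0)
  (* the setting *)
  (c1 : R) (Hc1 : c0 < c1 < 1) :
  exists CG : R,
    forall delta, delta > 0 -> Idelta_is dPsi delta 0 ->
    forall c, c0 <= c <= c1 ->
    forall a b, U c a b ->
    forall S S' : R -> R, in_X S S' ->
    admissible delta (Rmem Rbar kc c a b) (dRmem dRbar kc c a b) S S' ->
    (forall x, Rabs (Aop (Gop dPsi delta (Rmem Rbar kc c a b) S) x) <= CG * delta) /\
    (forall M, second_deriv_bound S' M ->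
       forall x, Rabs (Aop (Aop (Gop dPsi delta (Rmem Rbar kc c a b) S)) x)
                 <= CG * (1 + M) * delta ^ 2).
Proof.
  assert (HCPsi : 0 <= CPsi) by (eapply Rle_trans; [apply Rabs_pos | apply (HPsi5 1 Rlt_0_1 0)]).
  set (B := D0 / (1 - c1 ^ 2)).
  assert (HB : 0 <= B) by (unfold B; apply Rdiv_le_0_compat; nra).
  set (L0 := 4 * (B + 1) / c0 ^ 2).
  assert (HL0 : 0 <= L0) by (unfold L0; apply Rdiv_le_0_compat; nra).
  exists ((CPsi + 1) * (4 / d0 + (2 * (L0 + 1) / d0 + 4) * (4 / d0) ^ 2)).
  intros delta Hd HI c Hc a b Hab S S' [[HS _] [HS0 _]] Hadm.
  assert (Hc' : c0 <= c < 1) by lra.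
  destruct (HW2 c Hc' a b Hab) as [HR0 _].
  set (R0 := Rmem Rbar kc c a b) in *. set (R0' := dRmem dRbar kc c a b) in *.
  pose proof (wave_sign R0 R0' x0 r0 d0 Hr0 Hd0 HR0 (HR00 c Hc' a b Hab)
                (Hpos c Hc' a b Hab) (Hneg c Hc' a b Hab) (Hder c Hc' a b Hab)) as Hsign.
  assert (HR0' : lipschitz R0' L0).
  { apply (wave_derivative_lipschitz R0 R0' c c0 B).
    - lra.
    - apply (derivable_continuous R0 R0' HR0).
    - exact Hsign.
    - intro x. eapply Rle_trans; [apply (Hbnd c Hc' a b Hab) |].
      unfold B, Rdiv. apply Rmult_le_compat_l; [lra |]. apply Rinv_le_contravar; nra.
    - exact (Heq c Hc' a b Hab). }
  destruct Hadm as [xm [xp [Hends [Hright_end [Hleft_end [Hleft [Hright Hslope]]]]]]].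
  assert (Hphi : forall x, derivable_pt_lim (fun s => R0 s + S s) x (R0' x + S' x))
    by (intro x; apply (derivable_pt_lim_plus R0 S); auto).
  assert (Hslope' : forall x, xm < x < xp -> d0 / 2 <= R0' x + S' x).
  { intros x Hx. assert (R0' 0 > d0) by (apply (Hder c Hc' a b Hab); rewrite Rabs_R0; lra).
    pose proof (Hslope x Hx). lra. }
  assert (HdPsi : forall r, continuous (dPsi delta) r)
    by (apply (derivable_continuous _ (ddPsi delta)), HPsi2, Hd).
  pose proof (potential_balanced Psi dPsi delta Hd (HPsi1 delta Hd) HdPsi (HPsi4 delta Hd) HI)
    as Hbalanced.
  replace (Gop dPsi delta R0 S) with (fun s => dPsi delta (R0 s + S s) - sgn s)
    by (apply functional_extensionality; intro s; unfold Gop; rewrite Hsign; reflexivity).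
  destruct (layer_constants (CPsi + 1) d0 L0 0 delta) as [Hconst1 _]; try lra.
  split.
  - intro x. eapply Rle_trans; [| exact Hconst1].
    apply (layer_Aop_bound (dPsi delta) (fun s => R0 s + S s) (fun s => R0' s + S' s)
             delta CPsi (d0 / 2) xm xp); auto; lra.
  - intros M HM x. pose proof (lipschitz_nonneg S' M HM).
    destruct (layer_constants (CPsi + 1) d0 L0 M delta) as [_ Hconst2]; try lra.
    eapply Rle_trans; [| exact Hconst2].
    apply (layer_Aop2_bound (Psi delta) (dPsi delta) (fun s => R0 s + S s)
             (fun s => R0' s + S' s) delta CPsi (d0 / 2) xm xp); auto; try lra.
    - pose proof (HR00 c Hc' a b Hab) as HR0zero. fold R0 in HR0zero.
      rewrite HR0zero, HS0. ring.
    - exact (lipschitz_plus R0' S' L0 M HR0' HM).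
Qed.
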